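(* Let $m,n$ be nonnegative integers. The graphs $A(m)$ and $A(n)$ are isomorphic as edge-labeled directed graphs if and only if there exists a nonnegative integer $t$ such that $m=2^tn+2^t-1$ or $n=2^tm+2^t-1$.
   Context: A hyperbinary expansion of a nonnegative integer $n$ is a word $x_0\cdots x_k$ over $\{0,1,2\}$ with $x_0\ne0$ and $\sum_i x_i2^{k-i}=n$; the empty word is the unique expansion of $0$. $\mathcal H(n)$ is the set of such expansions. $A(n)$ is the directed graph on $\mathcal H(n)$ with the following labeled arcs, for arbitrary words $\mathbf x,\mathbf y$ whenever both endpoints lie in $\mathcal H(n)$: \begin{itemize} \item an arc labeled $\to$ from $\mathbf x02\mathbf y$ to $\mathbf x10\mathbf y$ and from $2\mathbf y$ to $10\mathbf y$; \item an arc labeled $\twoheadrightarrow$ from $\mathbf x12\mathbf y$ to $\mathbf x20\mathbf y$. \end{itemize} An isomorphism of edge-labeled directed graphs is a bijection $\varphi$ of vertex sets such that $(x,y)$ is an arc with label $\ell$ if and only if $(\varphi(x),\varphi(y))$ is an arc with label $\ell$. *)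

From mathcomp Require Import all_boot.
Set Implicit Arguments. Unset Strict Implicit. Unset Printing Implicit Defensive.

(* Words over {0,1,2} are represented as sequences of naturals, most
   significant digit first: x_0 ... x_k. *)

Definition hval (w : seq nat) : nat := foldl (fun acc d => acc.*2 + d) 0 w.

(* w is a hyperbinary expansion of n: digits in {0,1,2}, x_0 <> 0 (if
   nonempty), value n.  The empty word is the expansion of 0. *)
Definition is_hyperbinary (n : nat) (w : seq nat) : bool :=
  all (fun d => d <= 2) w && (head 1 w != 0) && (hval w == n).

Definition H (n : nat) := {w : seq nat | is_hyperbinary n w}.

Definition arc_single (u v : seq nat) : Prop :=
  (exists x y, u = x ++ [:: 0; 2] ++ y /\ v = x ++ [:: 1; 0] ++ y) \/
  (exists y, u = 2 :: y /\ v = [:: 1, 0 & y]).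

Definition arc_double (u v : seq nat) : Prop :=
  exists x y, u = x ++ [:: 1; 2] ++ y /\ v = x ++ [:: 2; 0] ++ y.

Definition A_isomorphic (m n : nat) : Prop :=
  exists phi : H m -> H n, bijective phi /\
    forall x y : H m,
      (arc_single (val x) (val y) <-> arc_single (val (phi x)) (val (phi y))) /\
      (arc_double (val x) (val y) <-> arc_double (val (phi x)) (val (phi y))).

(* Read words backwards, least significant digit first.  For an expansion r of n,
   the value of the digits of r from position k on is either n / 2^k or one less;
   the set of positions where it is one less, its deficit set, determines r.  The
   possible deficit sets are exactly the down-sets of the fence on {1, ..., h}
   (h = log2 n) in which k < k+1 when bit k of n is 1 and k+1 < k otherwise (for
   even n; prepending a digit 1 gives A(n) = A(2n+1), which reduces everything to
   that case).  An arc removes a maximal element k, with label -> or ->> according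
   to bit k.  An isomorphism of graphs therefore preserves the vertices with a
   single out-arc (the principal down-sets), the labels of those arcs and
   reachability between them, i.e. the fence with its labels; since the top bit is
   1, this forces the same bits, so m = n. *)

From mathcomp Require Import all_boot zify.
From Stdlib Require Import ClassicalEpsilon.
Set Implicit Arguments. Unset Strict Implicit. Unset Printing Implicit Defensive.

Section Fence.

Variable lam : nat -> bool.

(* The fence (zigzag) order on nat in which k < k.+1 when [lam k] and
   k.+1 < k otherwise: i <= j iff the path from i to j only climbs. *)
Definition fence_le i j : bool :=
  if i <= j then all lam (iota i (j - i))
  else all (fun k => ~~ lam k) (iota j (i - j)).

Lemma fence_leP i j : fence_le i j <->
  (i <= j /\ forall l, i <= l < j -> lam l) \/
  (j <= i /\ forall l, j <= l < i -> ~~ lam l).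
Proof.
rewrite /fence_le; case: leqP => hij.
- split=> [/allP h|[[_ h]|[hji h]]].
  + by left; split=> // l hl; apply: h; rewrite mem_iota; lia.
  + by apply/allP=> l; rewrite mem_iota => hl; apply: h; lia.
  + by apply/allP=> l; rewrite mem_iota; lia.
- split=> [/allP h|[[? _]|[_ h]]]; first 2 [lia].
  + by right; split=> [|l hl]; [lia|apply: h; rewrite mem_iota; lia].
  + by apply/allP=> l; rewrite mem_iota => hl; apply: h; lia.
Qed.

Lemma fence_le_refl i : fence_le i i.
Proof. by rewrite /fence_le leqnn subnn. Qed.

Lemma fence_le_up k : fence_le k k.+1 = lam k.
Proof. by rewrite /fence_le leqnSn subSnn /= andbT. Qed.

Lemma fence_le_down k : fence_le k.+1 k = ~~ lam k.
Proof. by rewrite /fence_le ltnn subSnn /= andbT. Qed.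

Lemma fence_le_between a b k : fence_le a k -> fence_le k b ->
  (a <= k <= b) \/ (b <= k <= a).
Proof.
move=> /fence_leP h1 /fence_leP h2.
case: h1 => [[a1 b1]|[a1 b1]]; case: h2 => [[a2 b2]|[a2 b2]]; try lia.
- case: (eqVneq k a) => [ea|nka]; first by right; lia.
  case: (eqVneq k b) => [eb|nkb]; first by left; lia.
  by move: (b1 k.-1 ltac:(lia)); rewrite (negbTE (b2 k.-1 ltac:(lia))).
- case: (eqVneq k a) => [ea|nka]; first by left; lia.
  case: (eqVneq k b) => [eb|nkb]; first by right; lia.
  by move: (b2 k ltac:(lia)); rewrite (negbTE (b1 k ltac:(lia))).
Qed.

Lemma fence_le_anti i j : fence_le i j -> fence_le j i -> i = j.
Proof. by move=> hij hji; have := fence_le_between hij hji; lia. Qed.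

Lemma fence_le_trans i j k : fence_le i j -> fence_le j k -> fence_le i k.
Proof.
move=> /fence_leP h1 /fence_leP h2; apply/fence_leP.
case: h1 => [[a1 b1]|[a1 b1]]; case: h2 => [[a2 b2]|[a2 b2]].
- by left; split=> [|l hl]; [lia|case: (ltnP l j) => ?; [apply: b1|apply: b2]; lia].
- case: (leqP i k) => hik; first by left; split=> // l hl; apply: b1; lia.
  by right; split=> [|l hl]; [lia|apply: b2; lia].
- case: (eqVneq j i) => [eji|nji]; first by left; split=> [|l hl]; [lia|apply: b2; lia].
  case: (eqVneq j k) => [ejk|njk]; first by right; split=> [|l hl]; [lia|apply: b1; lia].
  by move: (b2 j ltac:(lia)); rewrite (negbTE (b1 j ltac:(lia))).
- by right; split=> [|l hl]; [lia|case: (ltnP l j) => ?; [apply: b2|apply: b1]; lia].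
Qed.

Variable h : nat.

(* Down-sets of the fence on {1, ..., h}, stated through its covering relations. *)
Definition ideal (e : pred nat) : Prop :=
  [/\ forall k, e k -> 0 < k <= h,
      forall k, 0 < k < h -> lam k -> e k.+1 -> e k &
      forall k, 0 < k < h -> ~~ lam k -> e k -> e k.+1].

Definition del (e : pred nat) k : pred nat := fun i => e i && (i != k).

Lemma count_del (e : pred nat) k s : uniq s -> k \in s -> e k ->
  count e s = (count (del e k) s).+1.
Proof.
elim: s => [//|x s IH] /= /andP [xs us]; rewrite in_cons => /orP [/eqP ekx|ks] ek.
- subst x; rewrite ek /del eqxx andbF add1n; congr _.+1; apply: eq_in_count => i si.
  by rewrite (_ : i != k) ?andbT //; apply: contraNneq xs => <-.
- rewrite (IH us ks ek) /del; case: (eqVneq x k) => [exk|_]; last by rewrite /= andbT addnS.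
  by move: xs; rewrite exk ks.
Qed.

Definition principal j : pred nat := fun i => (0 < i <= h) && fence_le i j.

Lemma ideal_ext e e' : e =1 e' -> ideal e -> ideal e'.
Proof.
move=> ee' [s1 s2 s3]; split=> k; rewrite -!ee'; [exact: s1|exact: s2|exact: s3].
Qed.

Lemma ideal_down e i j : ideal e -> e j -> fence_le i j -> 0 < i <= h -> e i.
Proof.
move=> [s1 s2 s3] ej /fence_leP [[a b]|[a b]] hi; have hj := s1 j ej.
- move Ed: (j - i) => d; elim: d i a b hi Ed => [|d IH] i a b hi Ed.
    by have -> : i = j by lia.
  apply: s2; [lia|apply: b; lia|].
  by apply: IH => [|l hl||]; [lia|apply: b; lia|lia|lia].
- move Ed: (i - j) => d; elim: d i a b hi Ed => [|d IH] i a b hi Ed.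
    by have -> : i = j by lia.
  have -> : i = i.-1.+1 by lia.
  apply: s3; [lia|apply: b; lia|].
  by apply: IH => [|l hl||]; [lia|apply: b; lia|lia|lia].
Qed.

Lemma principal_ideal j : 0 < j <= h -> ideal (principal j).
Proof.
move=> hj; split=> [k /andP [] //|k hk hl /andP [_ hkj]|k hk hl /andP [_ hkj]].
- by rewrite /principal (fence_le_trans _ hkj) ?fence_le_up //; lia.
- by rewrite /principal (fence_le_trans _ hkj) ?fence_le_down //; lia.
Qed.

(* [t] can be removed from [e] iff it is maximal in [e]. *)
Lemma ideal_delP e t : ideal e -> e t -> ideal (del e t) <->
  (t < h -> lam t -> ~~ e t.+1) /\ (1 < t -> ~~ lam t.-1 -> ~~ e t.-1).
Proof.
move=> [s1 s2 s3] et; have ht := s1 t et; rewrite /del; split.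
- case=> _ d2 d3; split=> [th lt|t1 lt]; apply/negP=> e'.
  + by have := d2 t ltac:(lia) lt; rewrite e' eqxx andbF (gtn_eqF (ltnSn t)) => /(_ isT).
  + have := d3 t.-1 ltac:(lia) lt; rewrite e' prednK ?eqxx ?andbF; last by lia.
    by rewrite (ltn_eqF (_ : t.-1 < t)) => [/(_ isT)|]; lia.
- case=> c1 c2; split=> [k /andP [/s1] //|k hk hl /andP [ek nk]|k hk hl /andP [ek nk]].
  + rewrite s2 //=; apply/eqP=> ekt; subst k.
    by move: (c1 ltac:(lia) hl); rewrite ek.
  + rewrite s3 //=; apply/eqP=> ekt; have kt : k = t.-1 by lia.
    by move: (c2 ltac:(lia)); rewrite -kt hl ek => /(_ isT).
Qed.

Lemma principal_maximal j : 0 < j <= h -> ideal (del (principal j) j).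
Proof.
move=> hj; have pj : principal j j by rewrite /principal hj fence_le_refl.
apply/(ideal_delP (principal_ideal hj) pj); rewrite /principal.
split=> [_ lj|j1 lj]; first by rewrite fence_le_down lj andbF.
by have := fence_le_up j.-1; rewrite prednK => [->|]; [rewrite (negbTE lj) andbF|lia].
Qed.

Lemma principal_maximalE j k : 0 < j <= h -> principal j k ->
  ideal (del (principal j) k) -> k = j.
Proof.
move=> hj hk /(ideal_delP (principal_ideal hj) hk) [c1 c2].
case/andP: hk => hk /fence_leP [[a b]|[a b]]; case: (eqVneq k j) => // nkj.
- have := c1 ltac:(lia) (b k ltac:(lia)); rewrite /principal.
  have -> : fence_le k.+1 j by apply/fence_leP; left; split=> [|l hl]; [lia|apply: b; lia].
  by rewrite andbT (_ : 0 < k.+1 <= h) //; lia.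
- have := c2 ltac:(lia) (b k.-1 ltac:(lia)); rewrite /principal.
  have -> : fence_le k.-1 j by apply/fence_leP; right; split=> [|l hl]; [lia|apply: b; lia].
  by rewrite andbT (_ : 0 < k.-1 <= h) //; lia.
Qed.

(* Walk away from [i] along a climbing run of the fence as long as [e] allows. *)
Lemma exists_maximal_above e i : ideal e -> e i ->
  exists t, [/\ e t, ideal (del e t) & fence_le i t].
Proof.
move=> he ei; have [s1 _ _] := he.
pose S t := e t && fence_le i t.
have Si : S i by rewrite /S ei fence_le_refl.
case R: (lam i && e i.+1).
- have ubS : forall t, S t -> t <= h by move=> t /andP [/s1]; lia.
  case: (ex_maxnP (ex_intro S i Si) ubS) => t /andP [et it] tmax.
  exists t; split=> //; apply/ideal_delP => //; split=> [th lt|t1 lt]; apply/negP => et'.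
  + by have := tmax t.+1; rewrite /S et' (fence_le_trans it) ?fence_le_up //; lia.
  + case/andP: R => li ei1; have := tmax i.+1; rewrite /S ei1 fence_le_up li => /(_ isT) ti.
    by case/fence_leP: it => [[_ b]|[? _]]; [move: lt; rewrite b //|]; lia.
- case: (ex_minnP (ex_intro S i Si)) => t /andP [et it] tmin.
  exists t; split=> //; apply/ideal_delP => //; split=> [th lt|t1 lt]; apply/negP => et'.
  + have ti := tmin i Si; case: (eqVneq t i) => [eti|nti].
      by move: R; rewrite -eti lt et'.
    by case/fence_leP: it => [[? _]|[_ b]]; [|move: lt; rewrite (negbTE (b t _))]; lia.
  + have := tmin t.-1; rewrite /S et' (fence_le_trans it) //; last first.
      by rewrite -{1}(prednK (_ : 0 < t)) ?fence_le_down //; lia.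
    by move=> /(_ isT); lia.
Qed.

Lemma ideal_principalE e j : ideal e -> e j ->
  (forall k, e k -> ideal (del e k) -> k = j) -> e =1 principal j.
Proof.
move=> he ej uniq i; have [s1 _ _] := he; apply/idP/idP => [ei|/andP [hi hij]].
- have [t [et dt it]] := exists_maximal_above he ei.
  by rewrite /principal s1 //= -(uniq t et dt).
- exact: ideal_down he ej hij hi.
Qed.

Lemma ideal_diff_maximal e e' i : ideal e -> ideal e' ->
  e i -> ~~ e' i -> exists t, [/\ e t, ideal (del e t) & ~~ e' t].
Proof.
move=> he he' ei nei; have [t [et dt it]] := exists_maximal_above he ei.
exists t; split=> //; apply: contra nei => e't.
by have [s1 _ _] := he; apply: ideal_down he' e't it (s1 i ei).
Qed.

Lemma principal_inj j k : 0 < j <= h -> 0 < k <= h ->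
  principal j =1 principal k -> j = k.
Proof.
move=> hj hk ejk; apply: fence_le_anti.
- by have := ejk j; rewrite /principal hj fence_le_refl => /esym /andP [].
- by have := ejk k; rewrite /principal hk fence_le_refl => /andP [].
Qed.

Lemma principal_subset j k : 0 < j <= h ->
  (forall i, principal j i -> principal k i) <-> fence_le j k.
Proof.
move=> hj; split=> [/(_ j)|jk i /andP [hi ij]].
- by rewrite /principal hj fence_le_refl => /(_ isT) /andP [].
- by rewrite /principal hi (fence_le_trans ij jk).
Qed.

Definition fence_cover i j := [/\ fence_le i j, i <> j &
  forall k, 0 < k <= h -> fence_le i k -> fence_le k j -> k = i \/ k = j].

Lemma fence_cover_succ i : fence_cover i i.+1 \/ fence_cover i.+1 i.
Proof.
case E: (lam i); [left|right]; split; rewrite ?fence_le_up ?fence_le_down ?E //; try lia.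
- by move=> k _ h1 h2; have := fence_le_between h1 h2; lia.
- by move=> k _ h1 h2; have := fence_le_between h1 h2; lia.
Qed.

Lemma fence_cover_adjacent i j : 0 < i <= h -> 0 < j <= h -> fence_cover i j ->
  j = i.+1 \/ i = j.+1.
Proof.
move=> hi hj [/fence_leP [[a b]|[a b]] nij c].
- case: (eqVneq j i.+1) => [->|nj]; [by left|exfalso].
  have := c i.+1 ltac:(lia); rewrite fence_le_up b; last by lia.
  have -> : fence_le i.+1 j by apply/fence_leP; left; split=> [|l hl]; [lia|apply: b; lia].
  by move=> /(_ isT isT); lia.
- case: (eqVneq i j.+1) => [->|nj]; [by right|exfalso].
  have := c i.-1 ltac:(lia).
  have -> : fence_le i i.-1 by rewrite -{1}(prednK (_ : 0 < i)) ?fence_le_down ?b; lia.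
  have -> : fence_le i.-1 j by apply/fence_leP; right; split=> [|l hl]; [lia|apply: b; lia].
  by move=> /(_ isT isT); lia.
Qed.

End Fence.

(* An injective map of {1, ..., h} moving adjacent points to adjacent points
   cannot turn back, since that would identify the images of j and j.+2. *)
Lemma adjacent_inj_monotone (f : nat -> nat) h :
  (forall i j, 0 < i <= h -> 0 < j <= h -> f i = f j -> i = j) ->
  (forall j, 0 < j < h -> f j.+1 = (f j).+1 \/ f j = (f j.+1).+1) ->
  (forall j, 0 < j <= h -> f j = f 1 + j.-1) \/
  (forall j, 0 < j <= h -> f j + j.-1 = f 1).
Proof.
move=> finj fadj; case: (leqP h 1) => h1.
  by left; move=> j hj; rewrite (_ : j = 1) ?addn0 //; lia.
case: (fadj 1 ltac:(lia)) => hstart; [left|right].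
- have step : forall j, 0 < j < h -> f j.+1 = (f j).+1.
    elim=> [//|[|j] IH] hj; first by [].
    case: (fadj j.+2 hj) => // e2; have := IH ltac:(lia).
    by have := finj j.+3 j.+1 ltac:(lia) ltac:(lia); lia.
  elim=> [//|[|j] IH] hj; first by rewrite addn0.
  by rewrite step ?IH //; lia.
- have step : forall j, 0 < j < h -> f j = (f j.+1).+1.
    elim=> [//|[|j] IH] hj; first by [].
    case: (fadj j.+2 hj) => // e2; have := IH ltac:(lia).
    by have := finj j.+3 j.+1 ltac:(lia) ltac:(lia); lia.
  elim=> [//|[|j] IH] hj; first by rewrite addn0.
  by have := step j.+1 ltac:(lia); have := IH ltac:(lia); lia.
Qed.

(* Under the reversal j |-> h.+1 - j, order preservation forces [lam] to alternate,
   and an alternating pattern with [lam h] and [lam' h] is its own reversal. *)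
Lemma fence_reversal (lam lam' : nat -> bool) h : lam h -> lam' h ->
  (forall i j, 0 < i <= h -> 0 < j <= h ->
     fence_le lam i j = fence_le lam' (h.+1 - i) (h.+1 - j)) ->
  (forall j, 0 < j <= h -> lam j = lam' (h.+1 - j)) ->
  forall j, 0 < j <= h -> lam j = lam' j.
Proof.
move=> lh lh' fo fl.
have alt : forall j, 0 < j < h -> lam j = ~~ lam j.+1.
  move=> j hj; rewrite -fence_le_up fo; try lia.
  rewrite (_ : h.+1 - j = (h.+1 - j.+1).+1) ?fence_le_down -?fl //; lia.
have lam'E : forall k, 0 < k <= h -> lam' k = lam (h.+1 - k).
  by move=> k hk; rewrite fl ?subKn //; lia.
move=> j hj; move Ed: (h - j) => d; elim: d j hj Ed => [|d IH] j hj Ed.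
  by rewrite (_ : j = h) //; lia.
rewrite alt ?IH ?lam'E; try lia.
rewrite (_ : h.+1 - j = (h.+1 - j.+1).+1) ?(alt (h.+1 - j.+1)) ?negbK //; lia.
Qed.

Section FenceIso.

Variables (lam lam' : nat -> bool) (h h' : nat) (f : nat -> nat).
Hypotheses (f_range : forall j, 0 < j <= h -> 0 < f j <= h')
           (f_onto : forall k, 0 < k <= h' -> exists2 j, 0 < j <= h & f j = k)
           (f_mono : forall i j, 0 < i <= h -> 0 < j <= h ->
                       fence_le lam i j = fence_le lam' (f i) (f j)).

Lemma fence_iso_inj i j : 0 < i <= h -> 0 < j <= h -> f i = f j -> i = j.
Proof. by move=> hi hj e; apply: (@fence_le_anti lam); rewrite f_mono // e fence_le_refl. Qed.

Lemma fence_iso_adjacent j : 0 < j < h -> f j.+1 = (f j).+1 \/ f j = (f j.+1).+1.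
Proof.
have fcover a b : 0 < a <= h -> 0 < b <= h ->
    fence_cover lam h a b -> fence_cover lam' h' (f a) (f b).
  move=> ha hb [l n c]; split; first by rewrite -f_mono.
  - by move=> /fence_iso_inj e; apply: n; apply: e.
  - move=> k' hk'; have [k hk <-] := f_onto hk'; rewrite -!f_mono // => l1 l2.
    by case: (c k hk l1 l2) => ->; [left|right].
move=> hj; have hj1 : 0 < j <= h by lia.
have hj2 : 0 < j.+1 <= h by lia.
case: (fence_cover_succ lam h j) => /fcover hc.
- by have := fence_cover_adjacent (f_range hj1) (f_range hj2) (hc hj1 hj2); lia.
- by have := fence_cover_adjacent (f_range hj2) (f_range hj1) (hc hj2 hj1); lia.
Qed.

Lemma fence_rigid : lam h -> lam' h' -> (forall j, 0 < j <= h -> lam j = lam' (f j)) ->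
  h = h' /\ forall j, 0 < j <= h -> lam j = lam' j.
Proof.
move=> lh lh' f_lab; case: (posnP h) => [h0|hp].
  have h'0 : h' = 0 by case: (posnP h') => // ?; have [j] := @f_onto h' ltac:(lia); lia.
  by split=> [|j]; [rewrite h0|lia].
have fr1 := @f_range 1 ltac:(lia); have frh := @f_range h ltac:(lia).
have [j1 hj1 fj1] := @f_onto 1 ltac:(lia).
have [jh hjh fjh] := @f_onto h' ltac:(lia).
case: (adjacent_inj_monotone fence_iso_inj fence_iso_adjacent) => fE.
- have f1 : f 1 = 1 by move: (fE j1 hj1); lia.
  have fid : forall j, 0 < j <= h -> f j = j by move=> j hj; move: (fE j hj); lia.
  have ehh' : h = h' by move: (fid jh hjh) (fid h ltac:(lia)); lia.
  by split=> // j hj; rewrite f_lab // fid.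
- have f1 : f 1 = h' by move: (fE jh hjh) (fE 1 ltac:(lia)); lia.
  have ehh' : h = h' by move: (fE j1 hj1) (fE h ltac:(lia)); lia.
  have frev : forall j, 0 < j <= h -> f j = h.+1 - j by move=> j hj; move: (fE j hj); lia.
  rewrite -ehh' in lh'; split=> //; apply: fence_reversal => // [i j hi hj|j hj].
  + by rewrite f_mono // !frev.
  + by rewrite f_lab // frev.
Qed.

End FenceIso.

(* Words are handled reversed, least significant digit first, so that the
   digit at index i has weight 2 ^ i. *)
Definition lval (r : seq nat) : nat := foldr (fun d v => v.*2 + d) 0 r.

Definition lhyper (n : nat) (r : seq nat) : bool :=
  [&& all (fun d => d <= 2) r, last 1 r != 0 & lval r == n].

Lemma lval_cons d r : lval (d :: r) = (lval r).*2 + d.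
Proof. by []. Qed.

Lemma is_hyperbinary_rev n r : is_hyperbinary n (rev r) = lhyper n r.
Proof.
have hd_rev (s : seq nat) : head 1 (rev s) = last 1 s.
  by case/lastP: s => [|s x] //; rewrite rev_rcons last_rcons.
by rewrite /is_hyperbinary /lhyper all_rev hd_rev /hval foldl_rev andbA.
Qed.

Definition lsingle (r r' : seq nat) : Prop :=
  (exists p q, r = p ++ [:: 2, 0 & q] /\ r' = p ++ [:: 0, 1 & q]) \/
  (exists p, r = rcons p 2 /\ r' = p ++ [:: 0; 1]).

Definition ldouble (r r' : seq nat) : Prop :=
  exists p q, r = p ++ [:: 2, 1 & q] /\ r' = p ++ [:: 0, 2 & q].

Definition larc r r' := lsingle r r' \/ ldouble r r'.

Lemma arc_single_rev u v : arc_single u v <-> lsingle (rev u) (rev v).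
Proof.
split.
- case=> [[x [y [-> ->]]]|[y [-> ->]]].
  + by left; exists (rev y), (rev x); rewrite !rev_cat /= -!catA.
  + by right; exists (rev y); rewrite !rev_cons -!cats1 -catA.
- move=> huv; rewrite -[u]revK -[v]revK.
  case: huv => [[p [q [-> ->]]]|[p [-> ->]]].
  + by left; exists (rev q), (rev p); rewrite !rev_cat !rev_cons -!cats1 -!catA.
  + by right; exists (rev p); rewrite rev_rcons rev_cat.
Qed.

Lemma arc_double_rev u v : arc_double u v <-> ldouble (rev u) (rev v).
Proof.
split=> [[x [y [-> ->]]]|].
- by exists (rev y), (rev x); rewrite !rev_cat /= -!catA.
- move=> huv; rewrite -[u]revK -[v]revK; case: huv => [p [q [-> ->]]].
  by exists (rev q), (rev p); rewrite !rev_cat !rev_cons -!cats1 -!catA.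
Qed.

Definition Hrev n r (hr : lhyper n r) : H n :=
  exist _ (rev r) (etrans (is_hyperbinary_rev n r) hr).

Lemma lhyper_val n (x : H n) : lhyper n (rev (val x)).
Proof. by rewrite -is_hyperbinary_rev revK; case: x. Qed.

Lemma A_isomorphic_of_inverse m n (F G : seq nat -> seq nat) :
  (forall r, lhyper m r -> lhyper n (F r)) ->
  (forall r, lhyper n r -> lhyper m (G r)) ->
  (forall r, lhyper m r -> G (F r) = r) ->
  (forall r, lhyper n r -> F (G r) = r) ->
  (forall r1 r2, lhyper m r1 -> lhyper m r2 ->
    (lsingle r1 r2 <-> lsingle (F r1) (F r2)) /\ (ldouble r1 r2 <-> ldouble (F r1) (F r2))) ->
  A_isomorphic m n.
Proof.
move=> hF hG GF FG arcF.
exists (fun x => Hrev (hF _ (lhyper_val x))); split.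
- exists (fun y => Hrev (hG _ (lhyper_val y))) => [x|y]; apply: val_inj => /=.
  + by rewrite revK GF ?lhyper_val ?revK.
  + by rewrite revK FG ?lhyper_val ?revK.
- by move=> x y /=; rewrite !arc_single_rev !arc_double_rev !revK; apply: arcF; apply: lhyper_val.
Qed.

Lemma A_isomorphic_sym m n : A_isomorphic m n -> A_isomorphic n m.
Proof.
case=> phi [[g phiK gK] harc]; exists g; split; first by exists phi.
by move=> x y; have := harc (g x) (g y); rewrite !gK => -[<- <-].
Qed.

Lemma A_isomorphic_trans m n p :
  A_isomorphic m n -> A_isomorphic n p -> A_isomorphic m p.
Proof.
case=> phi [bphi harc] [psi [bpsi harc']]; exists (psi \o phi); split.
  exact: bij_comp.
by move=> x y /=; have [-> ->] := harc x y; apply: harc'.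
Qed.

Lemma lsingle_cons1 r1 r2 : lsingle (1 :: r1) (1 :: r2) <-> lsingle r1 r2.
Proof.
split=> [[[[|a p] [q [[_ ->] [_ ->]]]]|[[|a p] [[_ ->] [_ ->]]]] //|].
- by left; exists p, q.
- by right; exists p.
- by case=> [[p [q [-> ->]]]|[p [-> ->]]]; [left; exists (1 :: p), q|right; exists (1 :: p)].
Qed.

Lemma ldouble_cons1 r1 r2 : ldouble (1 :: r1) (1 :: r2) <-> ldouble r1 r2.
Proof.
split=> [[[|a p] [q [[_ ->] [_ ->]]]] //|[p [q [-> ->]]]]; first by exists p, q.
by exists (1 :: p), q.
Qed.

Lemma A_isomorphic_double_succ n : A_isomorphic n n.*2.+1.
Proof.
apply: (@A_isomorphic_of_inverse _ _ (cons 1) behead).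
- by move=> r /and3P [h1 h2 /eqP h3]; rewrite /lhyper lval_cons /= h1 h2 h3 addn1 eqxx.
- case=> [|d r] /and3P [] //= /andP [hd hr] hl /eqP hv; apply/and3P; split=> //.
  + by move: hl; case: (r).
  + by apply/eqP; move: hv; lia.
- by [].
- case=> [|d r] /and3P [] //= /andP [hd hr] hl /eqP hv.
  by congr (_ :: _); move: hv; lia.
- by move=> r1 r2 _ _; rewrite lsingle_cons1 ldouble_cons1.
Qed.

Lemma A_isomorphic_pow n t : A_isomorphic n (2 ^ t * n + 2 ^ t - 1).
Proof.
elim: t => [|t IH].
  by rewrite expn0 mul1n addnK; apply: (@A_isomorphic_of_inverse _ _ id id).
apply: A_isomorphic_trans IH _.
have -> : 2 ^ t.+1 * n + 2 ^ t.+1 - 1 = (2 ^ t * n + 2 ^ t - 1).*2.+1.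
  by have := expn_gt0 2 t; rewrite expnS; lia.
exact: A_isomorphic_double_succ.
Qed.

Definition high n k := n %/ 2 ^ k.
Definition bit n k := odd (high n k).
Definition whigh (r : seq nat) k := lval (drop k r).

Lemma highS n k : high n k = (high n k.+1).*2 + bit n k.
Proof. by rewrite /bit /high expnSr divnMA divn2 addnC odd_double_half. Qed.

Lemma high0 n : high n 0 = n.
Proof. by rewrite /high expn0 divn1. Qed.

Lemma whighS r k : whigh r k = (whigh r k.+1).*2 + nth 0 r k.
Proof.
rewrite /whigh; case: (ltnP k (size r)) => hk; first by rewrite (drop_nth 0 hk).
by rewrite !drop_oversize ?nth_default //; apply: leq_trans hk _.
Qed.

Lemma whigh0 r : whigh r 0 = lval r.
Proof. by rewrite /whigh drop0. Qed.

Lemma lval_cat s t : lval (s ++ t) = lval s + 2 ^ size s * lval t.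
Proof. by elim: s => [|x s IH]; rewrite ?mul1n //= expnS IH; lia. Qed.

Lemma lval_bound s : all (fun d => d <= 2) s -> lval s + 2 <= 2 ^ (size s).+1.
Proof. by elim: s => [//|x s IH] /= /andP [hx /IH]; rewrite !expnS; lia. Qed.

Lemma last_nonzero_behead d s : last d s != 0 -> last 1 s != 0.
Proof. by case: s. Qed.

Lemma last_nonzero_drop j s : last 1 s != 0 -> last 1 (drop j s) != 0.
Proof.
elim: s j => [|x s IH] [|j] //= hs; apply: IH; exact: last_nonzero_behead hs.
Qed.

Lemma lval_eq0 s : last 1 s != 0 -> lval s = 0 -> s = [::].
Proof.
elim: s => [//|x s IH] hl; rewrite lval_cons => hv.
have s0 : s = [::] by apply: (IH (@last_nonzero_behead x s hl)); lia.
by move: hl hv; rewrite s0 /=; lia.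
Qed.

Lemma whigh_inj r1 r2 : last 1 r1 != 0 -> last 1 r2 != 0 ->
  whigh r1 =1 whigh r2 -> r1 = r2.
Proof.
elim: r1 r2 => [|d1 s1 IH] [|d2 s2] // h1 h2 e.
- by have := e 0; rewrite !whigh0 => /esym /(lval_eq0 h2).
- by have := e 0; rewrite !whigh0 => /(lval_eq0 h1).
- have es : s1 = s2.
    apply: IH => [||k]; [exact: (@last_nonzero_behead d1)|exact: (@last_nonzero_behead d2)|].
    exact: e k.+1.
  by have := e 0; rewrite !whigh0 !lval_cons es => /addnI ->.
Qed.

Lemma lhyper_digits n r : lhyper n r -> all (fun d => d <= 2) r.
Proof. by case/and3P. Qed.

Lemma lhyper_last n r : lhyper n r -> last 1 r != 0.
Proof. by case/and3P. Qed.

Lemma lhyper_lval n r : lhyper n r -> lval r = n.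
Proof. by case/and3P=> _ _ /eqP. Qed.

Lemma lhyper_nth n r i : lhyper n r -> nth 0 r i <= 2.
Proof.
move=> /lhyper_digits ha; case: (ltnP i (size r)) => hi; last by rewrite nth_default.
by apply: (allP ha); apply: mem_nth.
Qed.

(* The digits below position k contribute less than 2 * 2 ^ k. *)
Lemma whigh_bound n r k : lhyper n r -> whigh r k <= high n k <= (whigh r k).+1.
Proof.
move=> hr; have ha := lhyper_digits hr; have hk2 : 0 < 2 ^ k := expn_gt0 2 k.
have [hk|hk] := ltnP (size r) k.
  rewrite /whigh drop_oversize ?(ltnW hk) // /high divn_small //= -(lhyper_lval hr).
  have := lval_bound ha; have : 2 ^ (size r).+1 <= 2 ^ k by rewrite leq_exp2l.
  lia.
have hst : size (take k r) = k by rewrite size_take_min; lia.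
have := @lval_bound (take k r); rewrite hst.
move: ha; rewrite -{1}(cat_take_drop k r) all_cat => /andP [-> _] /(_ isT) hb.
have -> : n = whigh r k * 2 ^ k + lval (take k r).
  by rewrite -(lhyper_lval hr) -{1}(cat_take_drop k r) lval_cat hst mulnC addnC.
rewrite /high divnMDl //.
have : lval (take k r) %/ 2 ^ k < 2 by rewrite ltn_divLR // -expnS; lia.
by move: (_ %/ _) => q; lia.
Qed.

(* The high part of an expansion falls short of that of n by at most one;
   [deficit n r] records where it does. *)
Definition deficit n r : pred nat := fun k => whigh r k != high n k.

Lemma whighE n r k : lhyper n r -> whigh r k = high n k - deficit n r k.
Proof. by move=> /(whigh_bound k); rewrite /deficit; case: eqP => [->|]; lia. Qed.

Lemma deficit_le_high n r k : lhyper n r -> deficit n r k <= high n k.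
Proof. by move=> /(whigh_bound k); rewrite /deficit; case: eqP; lia. Qed.

Lemma deficit_inj n r1 r2 : lhyper n r1 -> lhyper n r2 ->
  deficit n r1 =1 deficit n r2 -> r1 = r2.
Proof.
move=> h1 h2 e; apply: whigh_inj (lhyper_last h1) (lhyper_last h2) _ => k.
by rewrite (whighE k h1) (whighE k h2) e.
Qed.

(* An arc at position k turns the digits (2, d) at positions (k.-1, k) into
   (0, d.+1), which raises the high part at k, and only there, by one. *)
Definition bump (r r' : seq nat) k := forall i, whigh r' i = whigh r i + (i == k).

Lemma whigh_cat_low (p s s' : seq nat) i : lval s = lval s' -> i <= size p ->
  whigh (p ++ s) i = whigh (p ++ s') i.
Proof.
move=> hs hi; rewrite /whigh !drop_cat.
case: ltnP => [_|hpi]; first by rewrite !lval_cat hs.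
have -> : i = size p by lia.
by rewrite subnn !drop0 hs.
Qed.

Lemma whigh_cat_high (p s : seq nat) i : size p <= i ->
  whigh (p ++ s) i = lval (drop (i - size p) s).
Proof. by move=> hi; rewrite /whigh drop_cat ltnNge hi. Qed.

Lemma bump_mid (p q : seq nat) a b a' b' : a = a' + 2 -> b' = b + 1 ->
  bump (p ++ [:: a, b & q]) (p ++ [:: a', b' & q]) (size p).+1.
Proof.
move=> ha hb i; case: (ltngtP i (size p).+1) => hi.
- by rewrite addn0 (@whigh_cat_low p [:: a, b & q] [:: a', b' & q]) ?lval_cons //; lia.
- rewrite addn0 !whigh_cat_high; try lia.
  by have -> : i - size p = (i - size p - 2).+2 by lia.
- by rewrite hi !whigh_cat_high // subSnn /=; lia.
Qed.

Lemma bump_last (p : seq nat) : bump (rcons p 2) (p ++ [:: 0; 1]) (size p).+1.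
Proof.
rewrite -cats1 => i; case: (ltngtP i (size p).+1) => hi.
- by rewrite addn0 (@whigh_cat_low p [:: 2] [:: 0; 1]).
- rewrite addn0 !whigh_cat_high; try lia.
  by have -> : i - size p = (i - size p - 2).+2 by lia.
- by rewrite hi !whigh_cat_high // subSnn.
Qed.

Lemma bump_bit n r r' k : lhyper n r -> lhyper n r' -> bump r r' k ->
  bit n k = (nth 0 r k == 0) /\ nth 0 r k <= 1.
Proof.
move=> hr hr' b.
have := whighS r k; have := whighS r' k; have := b k; have := b k.+1.
rewrite eqxx (gtn_eqF (ltnSn k)) addn0 /=.
have := whigh_bound k hr; have := whigh_bound k hr'; have := whigh_bound k.+1 hr.
have := lhyper_nth k hr; have := lhyper_nth k hr'.
by have := highS n k; case: bit; case: eqP; lia.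
Qed.

Lemma lsingle_bump n r r' : lhyper n r -> lhyper n r' -> lsingle r r' ->
  exists k, 0 < k /\ bit n k /\ bump r r' k.
Proof.
move=> hr hr'; case=> [[p [q [E E']]]|[p [E E']]].
- have b : bump r r' (size p).+1 by rewrite E E'; apply: bump_mid.
  exists (size p).+1; do 2!split=> //; have [-> _] := bump_bit hr hr' b.
  by rewrite E nth_cat ltnNge leqnSn subSnn.
- have b : bump r r' (size p).+1 by rewrite E E'; apply: bump_last.
  exists (size p).+1; do 2!split=> //; have [-> _] := bump_bit hr hr' b.
  by rewrite E nth_default // size_rcons.
Qed.

Lemma ldouble_bump n r r' : lhyper n r -> lhyper n r' -> ldouble r r' ->
  exists k, 0 < k /\ ~~ bit n k /\ bump r r' k.
Proof.
move=> hr hr' [p [q [E E']]].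
have b : bump r r' (size p).+1 by rewrite E E'; apply: bump_mid.
exists (size p).+1; do 2!split=> //; have [-> _] := bump_bit hr hr' b.
by rewrite E nth_cat ltnNge leqnSn subSnn.
Qed.

Lemma bump_digits n r r' k : lhyper n r -> 0 < k -> bump r r' k ->
  [/\ forall i, i != k.-1 -> i != k -> nth 0 r' i = nth 0 r i,
      nth 0 r' k = (nth 0 r k).+1, nth 0 r k.-1 = 2 & nth 0 r' k.-1 = 0].
Proof.
move=> hr hk b; have same (i : nat) : i != k -> whigh r' i = whigh r i.
  by move/negbTE => nik; rewrite b nik addn0.
have sk : whigh r' k = (whigh r k).+1 by rewrite b eqxx addn1.
have sk1 : whigh r' k.-1 = whigh r k.-1 by apply: same; rewrite ltn_eqF // ltn_predL.
have sk2 : whigh r' k.+1 = whigh r k.+1 by apply: same; rewrite gtn_eqF.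
have := whighS r k.-1; have := whighS r' k.-1; rewrite prednK // sk sk1.
have := whighS r k; have := whighS r' k; rewrite sk sk2.
have := lhyper_nth k.-1 hr => d2 e1 e2 e3 e4; split; try lia.
move=> i h1 h2; have hi1 : i.+1 != k by apply: contra h1 => /eqP <-.
by have := whighS r i; have := whighS r' i; rewrite !same //; lia.
Qed.

Lemma nth_split2 (s : seq nat) k : 0 < k < size s ->
  s = take k.-1 s ++ [:: nth 0 s k.-1, nth 0 s k & drop k.+1 s].
Proof.
move=> /andP [k0 ks].
by rewrite -{1}(cat_take_drop k.-1 s) (drop_nth 0) ?prednK ?(drop_nth 0 ks) //; lia.
Qed.

Lemma bump_arc n r r' k : lhyper n r -> lhyper n r' -> 0 < k -> bump r r' k ->
  (bit n k -> lsingle r r') /\ (~~ bit n k -> ldouble r r').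
Proof.
move=> hr hr' hk b; have [same dk dr dr'] := bump_digits hr hk b.
have [bk ck] := bump_bit hr hr' b.
have szr : k <= size r.
  by case: (leqP k (size r)) => // h; move: dr; rewrite nth_default //; lia.
have szr' : k < size r' by case: (ltnP k (size r')) dk => // h; rewrite nth_default.
have eP : take k.-1 r' = take k.-1 r.
  apply: (@eq_from_nth _ 0) => [|i]; rewrite !size_take_min; first by lia.
  by move=> hi; rewrite !nth_take ?same //; apply/eqP; lia.
have eQ : drop k.+1 r' = drop k.+1 r.
  apply: whigh_inj; try exact/last_nonzero_drop/(lhyper_last hr').
    exact/last_nonzero_drop/(lhyper_last hr).
  move=> i; rewrite /whigh !drop_drop -/(whigh r' _) b.
  by rewrite (_ : i + k.+1 == k = false) ?addn0 //; lia.
have Er' : r' = take k.-1 r ++ [:: 0, (nth 0 r k).+1 & drop k.+1 r].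
  by rewrite {1}(@nth_split2 r' k) ?eP ?eQ ?dk ?dr' //; lia.
have Er (kr : k < size r) : r = take k.-1 r ++ [:: 2, nth 0 r k & drop k.+1 r].
  by rewrite {1}(@nth_split2 r k) ?dr //; lia.
split=> hb.
- have r0 : nth 0 r k = 0 by move: bk; rewrite hb => /esym /eqP.
  rewrite r0 in Er Er'; case: (ltnP k (size r)) => kr.
  + by left; exists (take k.-1 r), (drop k.+1 r); split; [apply: Er|].
  + right; exists (take k.-1 r); rewrite Er' drop_oversize; last by lia.
    split=> //; rewrite -{1}(cat_take_drop k.-1 r) -cats1 (drop_nth 0) ?prednK //; try lia.
    by rewrite drop_oversize ?dr //; lia.
- have r1 : nth 0 r k = 1 by move: bk ck; rewrite (negbTE hb); case: (nth 0 r k) => [|[]].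
  have kr : k < size r by case: (ltnP k (size r)) r1 => // h; rewrite nth_default.
  by rewrite r1 in Er Er'; exists (take k.-1 r), (drop k.+1 r); split; [apply: Er|].
Qed.

Lemma deficit0 n r : lhyper n r -> deficit n r 0 = false.
Proof. by move=> hr; rewrite /deficit whigh0 high0 (lhyper_lval hr) eqxx. Qed.

Lemma bump_deficit n r r' k : lhyper n r -> lhyper n r' ->
  bump r r' k <-> deficit n r k /\ deficit n r' =1 del (deficit n r) k.
Proof.
move=> hr hr'; rewrite /del; split=> [b|[dk e] i].
- have dk : deficit n r k.
    by have := b k; have := whigh_bound k hr'; rewrite /deficit eqxx; case: eqP => // ->; lia.
  split=> // i; case: (eqVneq i k) => [->|nik]; rewrite ?andbF ?andbT.
    by move: dk; rewrite /deficit b eqxx addn1; have := whigh_bound k hr; case: eqP; lia.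
  by rewrite /deficit b (negbTE nik) addn0.
- rewrite (whighE i hr) (whighE i hr') e; have := deficit_le_high i hr.
  by case: (eqVneq i k) => [->|nik]; rewrite ?dk ?andbF ?andbT ?addn0 //=; lia.
Qed.

Lemma larc_deficit n r r' : lhyper n r -> lhyper n r' ->
  larc r r' <-> exists2 k, deficit n r k & deficit n r' =1 del (deficit n r) k.
Proof.
move=> hr hr'; split=> [|[k dk e]].
- case=> [/(lsingle_bump hr hr')|/(ldouble_bump hr hr')] [k [_ [_ b]]];
    by have [dk e] := (bump_deficit k hr hr').1 b; exists k.
- have kp : 0 < k by case: k dk {e} => //; rewrite deficit0.
  have [hs hd] := bump_arc hr hr' kp ((bump_deficit k hr hr').2 (conj dk e)).
  by case: (boolP (bit n k)) => [/hs|/hd]; [left|right].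
Qed.

Lemma lsingle_deficit n r r' k : lhyper n r -> lhyper n r' ->
  deficit n r k -> deficit n r' =1 del (deficit n r) k -> lsingle r r' <-> bit n k.
Proof.
move=> hr hr' dk e; split=> [/(lsingle_bump hr hr') [k' [_ [bk' b]]]|bk].
- have [dk' e'] := (bump_deficit k' hr hr').1 b; suff -> : k = k' by [].
  by apply/eqP; move: (e k) (e' k); rewrite /del /= dk eqxx andbF andTb => -> /esym /negbFE.
- have kp : 0 < k by case: k dk {e bk} => //; rewrite deficit0.
  exact: (bump_arc hr hr' kp ((bump_deficit k hr hr').2 (conj dk e))).1.
Qed.

Lemma high_eq0 n k : trunc_log 2 n < k -> high n k = 0.
Proof.
move=> hk; rewrite /high divn_small //.
by apply: leq_trans (trunc_log_ltn n (isT : 1 < 2)) _; rewrite leq_exp2l.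
Qed.

Lemma high_gt0 n k : 0 < n -> k <= trunc_log 2 n -> 0 < high n k.
Proof.
move=> hn hk; rewrite /high divn_gt0 ?expn_gt0 //.
by apply: leq_trans (trunc_logP (isT : 1 < 2) hn); rewrite leq_exp2l.
Qed.

Lemma high_top n : 0 < n -> high n (trunc_log 2 n) = 1.
Proof.
move=> hn; have := high_gt0 hn (leqnn _); have := trunc_log_ltn n (isT : 1 < 2).
by rewrite /high expnS -ltn_divLR ?expn_gt0 //; lia.
Qed.

Lemma bit_top n : 0 < n -> bit n (trunc_log 2 n).
Proof. by move=> hn; rewrite /bit high_top. Qed.

Lemma deficit_ideal n r : lhyper n r -> ideal (bit n) (trunc_log 2 n) (deficit n r).
Proof.
move=> hr; split=> [k dk|k hk bk dk1|k hk bk dk].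
- case: (posnP k) dk => [-> |kp]; first by rewrite deficit0.
  case: leqP => // hk; rewrite /deficit high_eq0 //.
  by have := whigh_bound k hr; rewrite high_eq0 //; case: (whigh r k).
- have := whighE k hr; have := whighE k.+1 hr; have := deficit_le_high k.+1 hr.
  have := highS n k; have := whighS r k; have := lhyper_nth k hr.
  by rewrite bk dk1 /=; case: (deficit n r k) => //=; lia.
- have := whighE k hr; have := whighE k.+1 hr; have := deficit_le_high k hr.
  have := highS n k; have := whighS r k; have := lhyper_nth k hr.
  by rewrite (negbTE bk) dk /=; case: (deficit n r k.+1) => //=; lia.
Qed.

Section IdealWord.

Variables (n : nat) (e : pred nat).
Hypotheses (n_gt0 : 0 < n) (n_even : ~~ odd n) (e_ideal : ideal (bit n) (trunc_log 2 n) e).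

Let h := trunc_log 2 n.
Let digit k := bit n k + (e k.+1).*2 - e k.
Let len := h.+1 - e h.

(* The word whose high part at k is [high n k - e k]; its digits stay within {0,1,2}
   exactly because [e] is a down-set and n is even. *)
Definition ideal_word : seq nat := mkseq digit len.

Let e0 : e 0 = false.
Proof. by apply/negP; case: e_ideal => s1 _ _ /s1. Qed.

Let e_gt k : h < k -> e k = false.
Proof. by move=> hk; apply/negP; case: e_ideal => s1 _ _ /s1; lia. Qed.

Let ideal_word_digit k : digit k <= 2.
Proof.
have [s1 s2 _] := e_ideal; rewrite /digit.
case: (posnP k) => [->|kp]; first by rewrite e0 /bit high0 (negbTE n_even); case: (e 1).
case: (ltnP k h) => hkh; last by rewrite e_gt //=; case: bit; case: (e k).
by case E1: (e k.+1); case E2: (bit n k); case E3: (e k) => //=; rewrite s2 in E3; lia.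
Qed.

Let ideal_word_step k : high n k - e k = (high n k.+1 - e k.+1).*2 + digit k.
Proof.
have [s1 _ s3] := e_ideal; rewrite /digit; have := highS n k.
have p1 : e k.+1 -> 0 < high n k.+1 by move=> /s1 h1; apply: high_gt0; lia.
have p2 : e k -> ~~ e k.+1 -> bit n k.
  move=> ek nek; have hk := s1 k ek; case: (ltnP k h) => hkh.
    by apply/negP => nb; move: nek; rewrite (s3 k) //; lia.
  by rewrite (_ : k = h) ?bit_top //; lia.
case Ek: (e k); case Ek1: (e k.+1) => /= hrec.
- by have := p1 Ek1; move: hrec; case: bit => /=; lia.
- by have := p2 Ek (negbT Ek1); move: hrec; case: bit => //=; lia.
- by have := p1 Ek1; move: hrec; case: bit => /=; lia.
- by move: hrec; case: bit => /=; lia.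
Qed.

Lemma ideal_word_high k : whigh ideal_word k = high n k - e k.
Proof.
have tail k' : len <= k' -> high n k' - e k' = 0.
  move=> hk; case: (ltnP h k') => hkh; first by rewrite high_eq0.
  have eh : e h by move: hk; rewrite /len; case: (e h) => //=; lia.
  by rewrite (_ : k' = h) ?high_top ?eh //; move: hk; rewrite /len eh; lia.
move Ed: (len - k) => d; elim: d k Ed => [|d IH] k Ed.
  by rewrite tail ?/whigh ?drop_oversize ?size_mkseq //; lia.
by rewrite whighS nth_mkseq ?IH -?ideal_word_step //; lia.
Qed.

Lemma ideal_word_lhyper : lhyper n ideal_word.
Proof.
apply/and3P; split.
- by apply/(all_nthP 0) => i; rewrite size_mkseq => hi; rewrite nth_mkseq ?ideal_word_digit.
- have [s1 _ _] := e_ideal; rewrite /ideal_word /len; case E: (e h).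
  + have hp : 0 < h by have := s1 h E; lia.
    by rewrite (_ : h.+1 - true = h.-1.+1) ?mkseqS ?last_rcons /digit ?prednK ?E //; lia.
  + by change (h.+1 - false) with h.+1; rewrite mkseqS last_rcons /digit e_gt ?E ?bit_top.
- by rewrite -whigh0 ideal_word_high e0 subn0 high0.
Qed.

Lemma deficit_ideal_word : deficit n ideal_word =1 e.
Proof.
move=> k; rewrite /deficit ideal_word_high; case E: (e k) => /=.
  by have [s1 _ _] := e_ideal; have := high_gt0 n_gt0 (_ : k <= h); have := s1 k E; lia.
by rewrite subn0 eqxx.
Qed.

End IdealWord.

Definition liso m n (psi : seq nat -> seq nat) :=
  [/\ forall r, lhyper m r -> lhyper n (psi r),
      forall r', lhyper n r' -> exists2 r, lhyper m r & psi r = r',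
      forall r1 r2, lhyper m r1 -> lhyper m r2 -> psi r1 = psi r2 -> r1 = r2 &
      forall r1 r2, lhyper m r1 -> lhyper m r2 ->
        (lsingle r1 r2 <-> lsingle (psi r1) (psi r2)) /\
        (ldouble r1 r2 <-> ldouble (psi r1) (psi r2))].

Lemma liso_of_A_isomorphic m n : A_isomorphic m n -> exists psi, liso m n psi.
Proof.
case=> phi [bphi harc].
pose psi r := if insub (rev r) : option (H m) is Some x then rev (val (phi x)) else r.
have psiE r : lhyper m r -> exists u : H m, val u = rev r /\ psi r = rev (val (phi u)).
  by move=> hr; rewrite /psi; case: insubP => [u _ <-|]; [exists u|rewrite is_hyperbinary_rev hr].
exists psi; split.
- by move=> r /psiE [u [_ ->]]; apply: lhyper_val.
- move=> r' hr'; have [g phiK gK] := bphi.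
  exists (rev (val (g (Hrev hr')))); first exact: lhyper_val.
  have [u [eu ->]] := psiE _ (lhyper_val (g (Hrev hr'))).
  by rewrite (_ : u = g (Hrev hr')) ?gK /= ?revK //; apply: val_inj; rewrite eu revK.
- move=> r1 r2 /psiE [u1 [e1 ->]] /psiE [u2 [e2 ->]] /(congr1 rev); rewrite !revK.
  by move=> /val_inj /(bij_inj bphi) e; rewrite -(revK r1) -(revK r2) -e1 -e2 e.
- move=> r1 r2 /psiE [u1 [e1 ->]] /psiE [u2 [e2 ->]]; have [] := harc u1 u2.
  by rewrite !arc_single_rev !arc_double_rev e1 e2 !revK.
Qed.

Definition unique_succ n r := lhyper n r /\
  exists r1, [/\ lhyper n r1, larc r r1 & forall r2, lhyper n r2 -> larc r r2 -> r2 = r1].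

Definition has_single n r := exists r1, lhyper n r1 /\ lsingle r r1.

Inductive reach n : seq nat -> seq nat -> Prop :=
  | reach_refl r : lhyper n r -> reach n r r
  | reach_step r r1 r2 : lhyper n r -> lhyper n r1 -> larc r r1 -> reach n r1 r2 -> reach n r r2.

Section Transfer.

Variables (m n : nat) (psi : seq nat -> seq nat).
Hypothesis psi_iso : liso m n psi.

Lemma liso_larc r1 r2 : lhyper m r1 -> lhyper m r2 -> larc r1 r2 <-> larc (psi r1) (psi r2).
Proof.
by case: psi_iso => _ _ _ arcs h1 h2; have [a b] := arcs r1 r2 h1 h2; rewrite /larc a b.
Qed.

Lemma liso_unique_succ r : lhyper m r -> unique_succ m r <-> unique_succ n (psi r).
Proof.
move=> hr; have [hpsi onto inj _] := psi_iso; split.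
- case=> _ [r1 [hr1 a uniq]]; split; first exact: hpsi.
  exists (psi r1); split; [exact: hpsi|exact/(liso_larc hr hr1)|].
  by move=> _ /onto [r2 hr2 <-] /(liso_larc hr hr2) /(uniq _ hr2) ->.
- case=> _ [_ [/onto [r1 hr1 <-] a uniq]]; split=> //.
  exists r1; split=> //; first exact/(liso_larc hr hr1).
  by move=> r2 hr2 /(liso_larc hr hr2) /(uniq _ (hpsi _ hr2)); apply: inj.
Qed.

Lemma liso_has_single r : lhyper m r -> has_single m r <-> has_single n (psi r).
Proof.
move=> hr; have [hpsi onto _ arcs] := psi_iso; split.
- by case=> r1 [hr1 a]; exists (psi r1); split; [apply: hpsi|apply/(arcs r r1 hr hr1).1].
- by case=> _ [/onto [r1 hr1 <-] a]; exists r1; split; [|apply/(arcs r r1 hr hr1).1].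
Qed.

Lemma liso_reach r1 r2 : lhyper m r1 -> lhyper m r2 -> reach m r1 r2 <-> reach n (psi r1) (psi r2).
Proof.
have [hpsi onto inj _] := psi_iso; move=> h1 h2; split.
- elim=> [r0 hr0|r0 r3 r4 hr0 hr3 a _ IH]; first by apply/reach_refl/hpsi.
  by apply: reach_step (hpsi _ hr0) (hpsi _ hr3) _ IH; apply/(liso_larc hr0 hr3).
- move Ex1: (psi r1) => x1; move Ex2: (psi r2) => x2 hx.
  elim: hx r1 h1 Ex1 Ex2 => [x hx|x x' x'' hx hx' a _ IH] r0 h0 E0 E2.
    by rewrite -E2 in E0; rewrite (inj _ _ h0 h2 E0); apply: reach_refl.
  have [r' hr' ?] := onto x' hx'; subst x x'.
  by apply: (reach_step h0 hr'); [apply/(liso_larc h0 hr')|apply: IH].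
Qed.

End Transfer.

Lemma larc_del n r r' : lhyper n r -> lhyper n r' -> larc r r' ->
  exists k, [/\ deficit n r k, deficit n r' =1 del (deficit n r) k &
                ideal (bit n) (trunc_log 2 n) (del (deficit n r) k)].
Proof.
move=> hr hr' /(larc_deficit hr hr') [k dk e]; exists k; split=> //.
exact: ideal_ext e (deficit_ideal hr').
Qed.

Lemma reach_subset n r r' : reach n r r' -> forall i, deficit n r' i -> deficit n r i.
Proof.
elim=> [//|r0 r1 r2 hr0 hr1 a _ IH] i /IH.
by have [k [_ e _]] := larc_del hr0 hr1 a; rewrite e => /andP [].
Qed.

Section EvenDeficits.

Variable n : nat.
Hypotheses (n_gt0 : 0 < n) (n_even : ~~ odd n).

Let h := trunc_log 2 n.

Lemma exists_deficit e : ideal (bit n) h e -> exists2 r, lhyper n r & deficit n r =1 e.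
Proof.
by move=> he; exists (ideal_word n e); [apply: ideal_word_lhyper|apply: deficit_ideal_word].
Qed.

Lemma exists_larc_del r k : lhyper n r -> deficit n r k -> ideal (bit n) h (del (deficit n r) k) ->
  exists r', [/\ lhyper n r', larc r r' & deficit n r' =1 del (deficit n r) k].
Proof.
move=> hr dk /exists_deficit [r' hr' e]; exists r'; split=> //.
by apply/(larc_deficit hr hr'); exists k.
Qed.

Let principal_del_ideal r j : 0 < j <= h -> deficit n r =1 principal (bit n) h j ->
  ideal (bit n) h (del (deficit n r) j).
Proof. by move=> hj e; apply: ideal_ext (principal_maximal _ hj) => i; rewrite /del e. Qed.

Let principal_del_maximalE r j k : 0 < j <= h -> deficit n r =1 principal (bit n) h j ->
  deficit n r k -> ideal (bit n) h (del (deficit n r) k) -> k = j.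
Proof.
move=> hj e dk hk; apply: (@principal_maximalE (bit n) h j k hj); first by rewrite -e.
by apply: ideal_ext hk => i; rewrite /del e.
Qed.

Lemma unique_succ_principal r : unique_succ n r <->
  lhyper n r /\ exists2 j, 0 < j <= h & deficit n r =1 principal (bit n) h j.
Proof.
split=> [[hr [r1 [hr1 a uniq]]]|[hr [j hj e]]]; split=> //.
- have [k [dk e1 _]] := larc_del hr hr1 a.
  exists k; first by have [s1 _ _] := deficit_ideal hr; apply: s1.
  apply: ideal_principalE (deficit_ideal hr) dk _ => k' dk' hk'.
  have [r2 [hr2 a2 e2]] := exists_larc_del hr dk' hk'.
  apply/eqP; move: (e1 k'); rewrite -(uniq r2 hr2 a2) e2 /del dk' eqxx /=.
  by move=> /esym /negbFE.
- have dj : deficit n r j by rewrite e /principal hj fence_le_refl.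
  have [r1 [hr1 a1 e1]] := exists_larc_del hr dj (principal_del_ideal hj e).
  exists r1; split=> // r2 hr2 /(larc_del hr hr2) [k [dk e2 /(principal_del_maximalE hj e dk) kj]].
  by apply: (deficit_inj hr2 hr1) => i; rewrite e1 e2 kj.
Qed.

Lemma has_single_principal r j : 0 < j <= h -> lhyper n r ->
  deficit n r =1 principal (bit n) h j -> has_single n r <-> bit n j.
Proof.
move=> hj hr e; have dj : deficit n r j by rewrite e /principal hj fence_le_refl.
split=> [[r1 [hr1 s]]|bj].
- have [k [dk e1 /(principal_del_maximalE hj e dk) kj]] := larc_del hr hr1 (or_introl s).
  by rewrite -kj; apply/(lsingle_deficit hr hr1 dk e1).
- have [r1 [hr1 _ e1]] := exists_larc_del hr dj (principal_del_ideal hj e).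
  by exists r1; split=> //; apply/(lsingle_deficit hr hr1 dj e1).
Qed.

Lemma deficit_subset_eq r r' : lhyper n r -> lhyper n r' ->
  (forall i, deficit n r' i -> deficit n r i) ->
  ~~ has (fun i => deficit n r i && ~~ deficit n r' i) (iota 1 h) -> r = r'.
Proof.
move=> hr hr' sub nd; apply: (deficit_inj hr hr') => i; apply/idP/idP => [di|/sub //].
apply: contraNT nd => ndi; apply/hasP; exists i; rewrite ?di //.
by have [s1 _ _] := deficit_ideal hr; rewrite mem_iota; have := s1 i di; lia.
Qed.

(* Removing a maximal element of the deficit set of [r] that [r'] lacks. *)
Lemma deficit_subset_step r r' : lhyper n r -> lhyper n r' ->
  (forall i, deficit n r' i -> deficit n r i) ->
  has (fun i => deficit n r i && ~~ deficit n r' i) (iota 1 h) ->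
  exists r1, [/\ lhyper n r1, larc r r1,
    count (deficit n r) (iota 1 h) = (count (deficit n r1) (iota 1 h)).+1 &
    forall i, deficit n r' i -> deficit n r1 i].
Proof.
move=> hr hr' sub /hasP [i _ /andP [di ndi]].
have [t [dt ht ndt]] := ideal_diff_maximal (deficit_ideal hr) (deficit_ideal hr') di ndi.
have [r1 [hr1 a e]] := exists_larc_del hr dt ht.
exists r1; split=> //.
- rewrite (eq_count e) (@count_del _ t _ (iota_uniq 1 h)) // mem_iota.
  by have [s1 _ _] := deficit_ideal hr; have := s1 t dt; lia.
- by move=> k dk; rewrite e /del (sub k dk); apply: contraNneq ndt => <-.
Qed.

Lemma reach_deficit r r' : lhyper n r -> lhyper n r' ->
  reach n r r' <-> forall i, deficit n r' i -> deficit n r i.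
Proof.
move=> hr hr'; split=> [/reach_subset //|].
move Ec: (count (deficit n r) (iota 1 h)) => c.
elim: c r hr Ec => [|c IH] r hr Ec sub;
  case: (boolP (has (fun i => deficit n r i && ~~ deficit n r' i) (iota 1 h))) => hd;
  try by rewrite (deficit_subset_eq hr hr' sub hd); apply: reach_refl.
- by have [r1 [_ _ c0 _]] := deficit_subset_step hr hr' sub hd; rewrite Ec in c0.
- have [r1 [hr1 a c1 sub1]] := deficit_subset_step hr hr' sub hd.
  by apply: (reach_step hr hr1 a); apply: IH => //; rewrite Ec in c1; case: c1.
Qed.

Lemma reach_principal rj rk j k : 0 < j <= h -> lhyper n rj -> lhyper n rk ->
  deficit n rj =1 principal (bit n) h j -> deficit n rk =1 principal (bit n) h k ->
  reach n rk rj <-> fence_le (bit n) j k.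
Proof.
move=> hj hrj hrk ej ek; rewrite reach_deficit // -(principal_subset _ k hj).
by split=> sub i; move: (sub i); rewrite ej ek.
Qed.

End EvenDeficits.

Lemma eq_from_bits m n : trunc_log 2 m = trunc_log 2 n ->
  (forall k, k <= trunc_log 2 m -> bit m k = bit n k) -> m = n.
Proof.
move=> ehh eb; rewrite -(high0 m) -(high0 n).
suff high_eq d k : trunc_log 2 m - k = d -> high m k = high n k by exact: high_eq _ 0 erefl.
elim: d k => [|d IH] k hk.
  case: (ltnP (trunc_log 2 m) k) => hkm; first by rewrite !high_eq0 -?ehh.
  by rewrite (highS m) (highS n) !high_eq0 -?ehh ?eb //; lia.
by rewrite (highS m) (highS n) IH ?eb //; lia.
Qed.

Lemma unique_succ0 r : ~ unique_succ 0 r.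
Proof.
case=> hr [r1 [_ a _]]; move: hr a; rewrite /lhyper => /and3P [_ hl /eqP /(lval_eq0 hl) ->].
by case=> [[[[|? ?] [? []]]|[[|? ?] []]]|[[|? ?] [? []]]].
Qed.

Lemma exists_unique_succ n : 0 < n -> ~~ odd n -> exists r, unique_succ n r.
Proof.
move=> hn hev; have h1 : 0 < 1 <= trunc_log 2 n.
  by rewrite andTb trunc_log_gt0; case: n hn hev => [|[]].
have [r hr e] := exists_deficit hn hev (principal_ideal (bit n) h1).
by exists r; apply/unique_succ_principal => //; split=> //; exists 1.
Qed.

Section EvenIso.

Variables (m n : nat) (psi : seq nat -> seq nat).
Hypotheses (m_gt0 : 0 < m) (n_gt0 : 0 < n) (m_even : ~~ odd m) (n_even : ~~ odd n).
Hypothesis psi_iso : liso m n psi.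

Let hm := trunc_log 2 m.
Let hn := trunc_log 2 n.
Let word j := ideal_word m (principal (bit m) hm j).

Let word_lhyper j : 0 < j <= hm -> lhyper m (word j).
Proof. by move=> hj; apply/ideal_word_lhyper/principal_ideal. Qed.

Let word_deficit j : 0 < j <= hm -> deficit m (word j) =1 principal (bit m) hm j.
Proof. by move=> hj; apply/deficit_ideal_word/principal_ideal. Qed.

(* [psi] maps the principal down-set generated by j to the one generated by k. *)
Let image j k := 0 < k <= hn /\ deficit n (psi (word j)) =1 principal (bit n) hn k.

Let exists_image j : 0 < j <= hm -> exists k, image j k.
Proof.
move=> hj; have hw := word_lhyper hj.
have /(liso_unique_succ psi_iso hw) : unique_succ m (word j).
  by apply/(unique_succ_principal m_gt0 m_even); split=> //; exists j => //; apply: word_deficit.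
by case/(unique_succ_principal n_gt0 n_even) => _ [k hk ek]; exists k.
Qed.

Let f j := epsilon (inhabits 0) (image j).

Let f_image j : 0 < j <= hm -> image j (f j).
Proof. by move=> hj; apply: epsilon_spec; apply: exists_image. Qed.

Let f_onto k : 0 < k <= hn -> exists2 j, 0 < j <= hm & f j = k.
Proof.
move=> hk; have [_ onto inj _] := psi_iso.
have [r' hr' e'] := exists_deficit n_gt0 n_even (principal_ideal (bit n) hk).
have [r hr er] := onto r' hr'.
have /(unique_succ_principal m_gt0 m_even) [_ [j hj ej]] : unique_succ m r.
  apply/(liso_unique_succ psi_iso hr); rewrite er.
  by apply/(unique_succ_principal n_gt0 n_even); split=> //; exists k.
exists j => //; have [hfj efj] := f_image hj.
have wr : word j = r.
  by apply: (deficit_inj (word_lhyper hj) hr) => i; rewrite word_deficit ?ej.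
by apply: (@principal_inj (bit n) _ _ _ hfj hk) => i; rewrite -efj wr er e'.
Qed.

Let f_order i j : 0 < i <= hm -> 0 < j <= hm ->
  fence_le (bit m) i j = fence_le (bit n) (f i) (f j).
Proof.
move=> hi hj; have [hfi efi] := f_image hi; have [hfj efj] := f_image hj.
have [hpsi _ _ _] := psi_iso; have wi := word_lhyper hi; have wj := word_lhyper hj.
have rm := reach_principal m_gt0 m_even hi wi wj (word_deficit hi) (word_deficit hj).
have rn := reach_principal n_gt0 n_even hfi (hpsi _ wi) (hpsi _ wj) efi efj.
have tr := liso_reach psi_iso wj wi.
by apply/idP/idP => [/rm/tr/rn|/rn/tr/rm].
Qed.

Let f_bit j : 0 < j <= hm -> bit m j = bit n (f j).
Proof.
move=> hj; have [hfj efj] := f_image hj; have [hpsi _ _ _] := psi_iso.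
have hw := word_lhyper hj.
have sm := has_single_principal m_gt0 m_even hj hw (word_deficit hj).
have sn := has_single_principal n_gt0 n_even hfj (hpsi _ hw) efj.
have tr := liso_has_single psi_iso hw.
by apply/idP/idP => [/sm/tr/sn|/sn/tr/sm].
Qed.

Lemma even_liso_eq : m = n.
Proof.
have [ehh eb] := fence_rigid (fun j hj => (f_image hj).1) f_onto f_order
  (bit_top m_gt0) (bit_top n_gt0) f_bit.
apply: eq_from_bits ehh _ => -[|k] hk; last by apply: eb.
by rewrite /bit !high0 (negbTE m_even) (negbTE n_even).
Qed.

End EvenIso.

Lemma even_A_isomorphic_eq m n : ~~ odd m -> ~~ odd n -> A_isomorphic m n -> m = n.
Proof.
move=> hm hn /liso_of_A_isomorphic [psi L]; have [hpsi onto _ _] := L.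
case: (posnP m) => [m0|mp]; case: (posnP n) => [n0|np]; first by rewrite m0 n0.
- have [r' /[dup] [[hr' _]] u] := exists_unique_succ np hn.
  have [r hr er] := onto r' hr'; rewrite -er -(liso_unique_succ L hr) m0 in u.
  by case: (unique_succ0 u).
- have [r /[dup] [[hr _]] /(liso_unique_succ L hr)] := exists_unique_succ mp hm.
  by rewrite n0 => /unique_succ0.
- exact: even_liso_eq L.
Qed.

Lemma odd_decomposition m : exists t m0, ~~ odd m0 /\ m = 2 ^ t * m0 + 2 ^ t - 1.
Proof.
elim/ltn_ind: m => m IH; case Em: (odd m); last by exists 0, m; rewrite Em expn0 mul1n addnK.
have [|t [m0 [e0 e]]] := IH m./2.
  by rewrite -divn2 ltn_divLR //; move: Em; case: (m) => [|m'] /=; lia.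
exists t.+1, m0; split=> //; have := odd_double_half m; rewrite Em e expnS.
by have := expn_gt0 2 t; nia.
Qed.

Lemma expn_affineD a b x :
  2 ^ (a + b) * x + 2 ^ (a + b) - 1 = 2 ^ a * (2 ^ b * x + 2 ^ b - 1) + 2 ^ a - 1.
Proof. by rewrite expnD; have := expn_gt0 2 a; have := expn_gt0 2 b; nia. Qed.

Theorem mainTheorem11 (m n : nat) :
  A_isomorphic m n <->
  exists t : nat, m = 2 ^ t * n + 2 ^ t - 1 \/ n = 2 ^ t * m + 2 ^ t - 1.
Proof.
split=> [iso|[t [->|->]]]; last first.
- exact: A_isomorphic_pow.
- exact/A_isomorphic_sym/A_isomorphic_pow.
have [t [m0 [ev_m0 em]]] := odd_decomposition m.
have [s [n0 [ev_n0 en]]] := odd_decomposition n.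
have e0 : m0 = n0.
  apply: even_A_isomorphic_eq ev_m0 ev_n0 _.
  apply: A_isomorphic_trans (A_isomorphic_pow m0 t) _; rewrite -em.
  by apply: A_isomorphic_trans iso _; rewrite en; apply/A_isomorphic_sym/A_isomorphic_pow.
rewrite em en e0; case: (leqP s t) => hst; [exists (t - s); left|exists (s - t); right].
- by rewrite -expn_affineD subnK.
- by rewrite -expn_affineD subnK // ltnW.
Qed.
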